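(* For every $n\ge1$, the cloaktic monoid $\mathcal K_n$ satisfies every semigroup identity that is satisfied by the monoid $\mathrm{TMat}_n(\mathbb T)$ of $n\times n$ upper triangular tropical matrices under tropical multiplication.
   Context: $\mathcal A_n=\{a_1<\cdots<a_n\}$. For $w\in\mathcal A_n^*$ and $1\le i\le j\le n$, $L_{[i,j]}(w)$ is the maximal length of a nondecreasing (not necessarily contiguous) subword of $w$ with all letters in $\{a_i,\dots,a_j\}$ ($0$ if none); $u\equiv_{\mathrm{clk}}v$ iff $L_{[i,j]}(u)=L_{[i,j]}(v)$ for all $i\le j$, and $\mathcal K_n=\mathcal A_n^*/{\equiv_{\mathrm{clk}}}$. Tropical semiring $\mathbb T=\mathbb R\cup\{-\infty\}$ with $\max$ as addition and $+$ as multiplication; $\mathrm{TMat}_n(\mathbb T)$ consists of the matrices with entries $-\infty$ below the diagonal, with product $(A\odot B)_{i,j}=\max_t(a_{i,t}+b_{t,j})$. A semigroup identity is a formal equality $u=v$ of two distinct nonempty words over a set of variables; a semigroup $S$ satisfies it if $\varphi(u)=\varphi(v)$ for every semigroup homomorphism $\varphi$ from the free semigroup on the variables to $S$. *)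

From Stdlib Require Import Reals.
From mathcomp Require Import all_boot.
Set Implicit Arguments. Unset Strict Implicit. Unset Printing Implicit Defensive.

(* The value of a nonempty
   word x :: w under an assignment f of the variables is the product
   f x * f w_1 * ... * f w_k (this is the image of the word under the unique
   semigroup homomorphism from the free semigroup extending f). *)
Definition word_eval (S : Type) (op : S -> S -> S) (f : nat -> S) (x : nat)
  (w : seq nat) : S := foldl (fun a z => op a (f z)) (f x) w.

(* The semigroup given by the carrier {s : S | P s}, the (associative,
   P-closed) operation op, and the equality eqS, satisfies the identity u = v. *)
Definition satisfies (S : Type) (P : S -> Prop) (eqS : S -> S -> Prop)
  (op : S -> S -> S) (u v : seq nat) : Prop :=
  forall f : nat -> S, (forall x, P (f x)) ->
    match u, v with
    | x :: u', y :: v' => eqS (word_eval op f x u') (word_eval op f y v')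
    | _, _ => True
    end.

Definition is_identity (u v : seq nat) : Prop :=
  [/\ u != [::], v != [::] & u != v].

(* Letters a_1 < ... < a_n are represented by 'I_n (a_k = k-1). *)
(* L_[i,j](w): maximal length of a nondecreasing subword of w with all letters
   in {a_i, ..., a_j} (0 if none); i, j are given as 0-based nat indices. *)
Definition Lij (n : nat) (i j : nat) (w : seq 'I_n) : nat :=
  \max_(m : (size w).-tuple bool |
          sorted (fun a b : 'I_n => (a <= b)%N) (mask m w)
          && all (fun a : 'I_n => (i <= a <= j)%N) (mask m w))
     size (mask m w).

Definition clk_equiv (n : nat) (u v : seq 'I_n) : Prop :=
  forall i j : 'I_n, (i <= j)%N -> Lij i j u = Lij i j v.

(* K_n = A_n^* / clk_equiv, with product induced by concatenation. *)
Definition K_satisfies (n : nat) (u v : seq nat) : Prop :=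
  satisfies (fun _ : seq 'I_n => True) (@clk_equiv n) (@cat 'I_n) u v.

(* T = R ∪ {-oo}, with None = -oo. *)
Definition trop := option R.

Definition tadd (a b : trop) : trop :=
  match a, b with
  | None, _ => b
  | _, None => a
  | Some x, Some y => Some (Rmax x y)
  end.

Definition tmul (a b : trop) : trop :=
  match a, b with
  | Some x, Some y => Some (Rplus x y)
  | _, _ => None
  end.

Definition tmat (n : nat) := 'I_n -> 'I_n -> trop.

Definition tmat_mul (n : nat) (A B : tmat n) : tmat n :=
  fun i j => \big[tadd/None]_(t < n) tmul (A i t) (B t j).

Definition upper_tri (n : nat) (A : tmat n) : Prop :=
  forall i j : 'I_n, (j < i)%N -> A i j = None.

Definition tmat_eq (n : nat) (A B : tmat n) : Prop := forall i j, A i j = B i j.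

Definition TMat_satisfies (n : nat) (u v : seq nat) : Prop :=
  satisfies (@upper_tri n) (@tmat_eq n) (@tmat_mul n) u v.

(* The map sending a word w to the upper triangular tropical matrix whose
   (i, j) entry, for i <= j, is L_[i,j](w) is a morphism from the free monoid
   to TMat_n: a longest nondecreasing subword of w1 w2 with letters in
   [a_i, a_j] splits at some letter a_t into a longest such subword of w1 with
   letters in [a_i, a_t] followed by one of w2 with letters in [a_t, a_j], which
   is exactly the tropical matrix product formula. Two words are
   cloaktic-equivalent iff their matrices agree, so any identity of TMat_n,
   evaluated on these matrices, yields an identity of K_n. *)
From Stdlib Require Import Reals.
From mathcomp Require Import all_boot.
Set Implicit Arguments. Unset Strict Implicit.

Lemma subseq_catP (T : eqType) (s w1 w2 : seq T) : subseq s (w1 ++ w2) ->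
  exists s1 s2, [/\ s = s1 ++ s2, subseq s1 w1 & subseq s2 w2].
Proof.
case/subseqP=> m size_m ->.
have size_take : size (take (size w1) m) = size w1.
  by rewrite size_takel // size_m size_cat leq_addr.
exists (mask (take (size w1) m) w1), (mask (drop (size w1) m) w2).
by rewrite -mask_cat // cat_take_drop !mask_subseq.
Qed.

Section LongestChains.
Variable n : nat.

Definition ordle : rel 'I_n := fun a b => (a <= b)%N.

Lemma ordle_trans : transitive ordle.
Proof. by move=> b a c; apply: leq_trans. Qed.

Definition chain (i j : nat) (s : seq 'I_n) : bool :=
  sorted ordle s && all (fun a : 'I_n => (i <= a <= j)%N) s.

Lemma Lij_ge_chain i j (s w : seq 'I_n) :
  subseq s w -> chain i j s -> (size s <= Lij i j w)%N.
Proof.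
case/subseqP=> m /eqP size_m -> chain_s.
exact: (@leq_bigmax_cond _ _ (fun m : (size w).-tuple bool => size (mask m w))
          (Tuple size_m)).
Qed.

Lemma Lij_chain i j (w : seq 'I_n) :
  exists s, [/\ subseq s w, chain i j s & size s = Lij i j w].
Proof.
pose P (m : (size w).-tuple bool) := chain i j (mask m w).
have P0 : P (nseq_tuple (size w) false) by rewrite /P mask_false.
rewrite /Lij (bigmax_eq_arg _ P0); case: arg_maxnP => // m Pm _.
by exists (mask m w); split=> //; apply/subseqP; exists m; rewrite ?size_tuple.
Qed.

Lemma chain_cat i t j (s1 s2 : seq 'I_n) : (i <= t <= j)%N ->
  chain i t s1 -> chain t j s2 -> chain i j (s1 ++ s2).
Proof.
case/andP=> le_it le_tj /andP[sorted1 range1] /andP[sorted2 range2].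
rewrite /chain all_cat !(sorted_pairwise ordle_trans) pairwise_cat.
rewrite -!(sorted_pairwise ordle_trans) sorted1 sorted2 !andbT.
apply/and3P; split.
- apply/allrelP=> a b /(allP range1)/andP[_ le_at] /(allP range2)/andP[le_tb _].
  exact: leq_trans le_at le_tb.
- by apply/allP=> a /(allP range1)/andP[-> /leq_trans->].
- by apply/allP=> a /(allP range2)/andP[/(leq_trans le_it)-> ->].
Qed.

Lemma chain_cat_split i (j : 'I_n) (s1 s2 : seq 'I_n) :
  (i <= j)%N -> chain i j (s1 ++ s2) ->
  [/\ (i <= head j s2 <= j)%N, chain i (head j s2) s1 & chain (head j s2) j s2].
Proof.
move=> le_ij; rewrite /chain all_cat => /andP[sorted12 /andP[range1 range2]].
have [sorted1 sorted2] := cat_sorted2 sorted12.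
case: s2 sorted12 sorted2 range2 => [|y s2] sorted12 sorted2 range2.
  by rewrite /= le_ij leqnn sorted1 range1.
have /andP[le_iy le_yj] := allP range2 y (mem_head y s2).
rewrite [head _ _]/= le_iy le_yj sorted1 sorted2; split=> //.
- move: sorted12; rewrite (sorted_pairwise ordle_trans) pairwise_cat.
  case/and3P=> /allrelP below _ _.
  apply/allP=> a a_s1; rewrite (andP (allP range1 a a_s1)).1.
  exact: below a_s1 (mem_head y s2).
- apply/allP=> b b_s2; rewrite (andP (allP range2 b b_s2)).2 andbT.
  move: b_s2; rewrite inE => /predU1P[-> // | b_s2].
  by move: sorted2 => /= /(order_path_min ordle_trans)/allP; apply.
Qed.

Lemma Lij_cat_ge i t j (w1 w2 : seq 'I_n) : (i <= t <= j)%N ->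
  (Lij i t w1 + Lij t j w2 <= Lij i j (w1 ++ w2))%N.
Proof.
move=> range_t.
have [s1 [sub1 chain1 <-]] := Lij_chain i t w1.
have [s2 [sub2 chain2 <-]] := Lij_chain t j w2.
by rewrite -size_cat Lij_ge_chain ?cat_subseq // (chain_cat range_t).
Qed.

Lemma Lij_cat_split i (j : 'I_n) (w1 w2 : seq 'I_n) : (i <= j)%N ->
  exists2 t : 'I_n, (i <= t <= j)%N & Lij i j (w1 ++ w2) = Lij i t w1 + Lij t j w2.
Proof.
move=> le_ij; have [s [sub + +]] := Lij_chain i j (w1 ++ w2).
have [s1 [s2 [-> sub1 sub2]]] := subseq_catP sub => chain_s size_s.
have [range_t chain1 chain2] := chain_cat_split le_ij chain_s.
exists (head j s2) => //; apply/eqP; rewrite eqn_leq Lij_cat_ge // andbT.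
by rewrite -size_s size_cat leq_add ?Lij_ge_chain.
Qed.

End LongestChains.

Lemma big_tadd_None (I : Type) (r : seq I) (F : I -> trop) :
  (forall t, F t = None) -> \big[tadd/None]_(t <- r) F t = None.
Proof. by move=> F_None; apply: (big_rec (eq^~ None)) => // t a _ ->; rewrite F_None. Qed.

Definition trop_le (a : trop) (c : R) : Prop :=
  if a is Some x then Rle x c else True.

Lemma big_tadd_le (I : Type) (r : seq I) (F : I -> trop) c :
  (forall t, trop_le (F t) c) -> trop_le (\big[tadd/None]_(t <- r) F t) c.
Proof.
move=> F_le; apply: (big_rec (trop_le^~ c)) => // t a _; move: (F_le t).
by case: (F t) a => [x|] [y|] //= *; apply: Rmax_lub.
Qed.

Lemma big_tadd_max (I : eqType) (r : seq I) (F : I -> trop) c :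
  (forall t, trop_le (F t) c) -> (exists2 t, t \in r & F t = Some c) ->
  \big[tadd/None]_(t <- r) F t = Some c.
Proof.
move=> F_le; elim: r => [[t] // | t r IHr] [t']; rewrite big_cons inE.
case/predU1P=> [-> -> | t'_r Ft'].
  by have := big_tadd_le r F_le; case: (\big[_/_]_(_ <- r) _) => //= y /Rmax_left->.
by rewrite IHr; last exists t'; move: (F_le t); case: (F t) => //= x /Rmax_right->.
Qed.

Section WordMatrix.
Variable n : nat.

Definition Lmat (w : seq 'I_n) : tmat n :=
  fun i j => if (i <= j)%N then Some (INR (Lij i j w)) else None.

Lemma upper_tri_Lmat (w : seq 'I_n) : upper_tri (Lmat w).
Proof. by move=> i j lt_ji; rewrite /Lmat leqNgt lt_ji. Qed.

Lemma Lmat_cat (w1 w2 : seq 'I_n) :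
  tmat_eq (Lmat (w1 ++ w2)) (tmat_mul (Lmat w1) (Lmat w2)).
Proof.
move=> i j; rewrite /tmat_mul /Lmat.
have [le_ij | lt_ji] := leqP i j; last first.
  apply/esym/big_tadd_None=> t; case: ifP => le_it; case: ifP => le_tj //.
  by move: (leq_trans le_it le_tj); rewrite leqNgt lt_ji.
apply/esym/big_tadd_max.
  move=> t; case: ifP => le_it; case: ifP => le_tj //=.
  by rewrite -plus_INR; apply/le_INR/leP/Lij_cat_ge; rewrite le_it.
have [t /andP[le_it le_tj] ->] := Lij_cat_split w1 w2 le_ij.
by exists t; rewrite ?mem_index_enum // le_it le_tj plus_INR.
Qed.

Lemma tmat_mul_eq (A A' B B' : tmat n) : tmat_eq A A' -> tmat_eq B B' ->
  tmat_eq (tmat_mul A B) (tmat_mul A' B').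
Proof. by move=> eqA eqB i j; apply: eq_bigr => t _; rewrite eqA eqB. Qed.

Lemma Lmat_word_eval (f : nat -> seq 'I_n) x u :
  tmat_eq (Lmat (word_eval (@cat 'I_n) f x u))
          (word_eval (@tmat_mul n) (Lmat \o f) x u).
Proof.
rewrite /word_eval; have : tmat_eq (Lmat (f x)) ((Lmat \o f) x) by [].
elim: u (f x) ((Lmat \o f) x) => //= z u IHu w A eq_wA.
apply: IHu => i j; rewrite Lmat_cat; exact: tmat_mul_eq.
Qed.

End WordMatrix.

Theorem mainTheorem8 (n : nat) (u v : seq nat) :
  (1 <= n)%N -> is_identity u v ->
  TMat_satisfies n u v -> K_satisfies n u v.
Proof.
move=> _ _ TMat_uv f _.
have {TMat_uv} := TMat_uv (@Lmat n \o f) (fun z => @upper_tri_Lmat n (f z)).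
case: u => [|x u] //; case: v => [|y v] // eq_uv i j le_ij.
have := eq_uv i j; rewrite -Lmat_word_eval -Lmat_word_eval /Lmat le_ij.
by case=> /INR_eq.
Qed.
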